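(* If $\alpha$ is a non-zero rational number other than $\pm1$, then $M_\infty(\alpha)$ equals the largest prime dividing the numerator or the denominator of $\alpha$ (written in lowest terms).
   Context: For a non-zero algebraic number $\gamma$ with minimal polynomial $A\prod_{n=1}^N(x-\gamma_n)$ over $\mathbb Z$ (primitive, $A>0$), $M(\gamma)=A\prod_{n=1}^N\max\{1,|\gamma_n|\}$. The ultrametric Mahler measure is $M_\infty(\alpha)=\inf\{\max_{1\le n\le N}M(\alpha_n): N\in\mathbb N,\ \alpha_n\in\overline{\mathbb Q}^\times,\ \alpha=\alpha_1\cdots\alpha_N\}$. *)

From HB Require Import structures.
From mathcomp Require Import all_boot all_order all_algebra all_field.
From Stdlib Require Import ClassicalEpsilon.
Set Implicit Arguments. Unset Strict Implicit. Unset Printing Implicit Defensive.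
Import Order.TTheory GRing.Theory Num.Theory.
Local Open Scope ring_scope.

Definition is_minpolyZ (g : algC) (P : {poly int}) : Prop :=
  [/\ P != 0,
      root (map_poly (fun z : int => z%:~R : algC) P) g,
      (forall Q : {poly int}, Q != 0 ->
         root (map_poly (fun z : int => z%:~R : algC) Q) g ->
         (size P <= size Q)%N),
      zcontents P = 1 &
      0 < lead_coef P].

Definition mahler_rel (g : algC) (m : algC) : Prop :=
  exists (P : {poly int}) (rs : seq algC),
    [/\ is_minpolyZ g P,
        map_poly (fun z : int => z%:~R : algC) P
          = (lead_coef P)%:~R *: \prod_(r <- rs) ('X - r%:P) &
        m = (lead_coef P)%:~R * \prod_(r <- rs) Num.max 1 `|r| ].

Definition mahler (g : algC) : algC := epsilon (inhabits 0) (mahler_rel g).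

Definition ultra_values (a : algC) (y : algC) : Prop :=
  exists s : seq algC,
    [/\ (0 < size s)%N, all (fun x => x != 0) s,
        \prod_(x <- s) x = a &
        y = \big[Num.max/0]_(x <- s) mahler x].

Definition is_inf (S : algC -> Prop) (x : algC) : Prop :=
  (forall y, S y -> x <= y) /\
  (forall e : algC, 0 < e -> exists y, S y /\ y < x + e).

Definition ultra_mahler_is (a : algC) (x : algC) : Prop :=
  is_inf (ultra_values a) x.

Definition lpf (n : nat) : nat := \max_(p <- primes n) p.

(* Upper bound: write a = +-(q_1 ... q_k) / (r_1 ... r_l) with the q_i, r_j the
   prime factors, with multiplicity, of the numerator and denominator of a.  A
   rational u/v in lowest terms has minimal polynomial vX - u, hence Mahler measure
   max(|u|, v), so every factor has measure at most the largest of these primes p.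
   Lower bound: if the minimal polynomial of x != 0 has leading coefficient A and
   constant term c, then A x and c / x are algebraic integers, and A, |c| <= M(x).
   If every factor of a factorization a = x_1 ... x_N had measure < p, multiplying
   these relations would give integers prime to p turning a, resp. 1 / a, into
   algebraic, hence rational, integers; so p would divide neither the denominator
   nor the numerator of a. *)

From HB Require Import structures.
From mathcomp Require Import all_boot all_order all_algebra all_field.
From Stdlib Require Import ClassicalEpsilon.
From mathcomp Require Import ring.
Set Implicit Arguments. Unset Strict Implicit. Unset Printing Implicit Defensive.
Import Order.TTheory GRing.Theory Num.Theory.
Local Open Scope ring_scope.

Local Notation pZtoC := (map_poly (fun z : int => z%:~R : algC)).
Local Notation pZtoQ := (map_poly (intr : int -> rat)).
Local Notation pQtoC := (map_poly (ratr : rat -> algC)).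

Lemma pZtoCE (q : {poly int}) : pZtoC q = pQtoC (pZtoQ q).
Proof. by rewrite -map_poly_comp; apply: eq_map_poly => z /=; rewrite rmorph_int. Qed.

Lemma size_pZtoC (q : {poly int}) : size (pZtoC q) = size q.
Proof. by apply: size_map_inj_poly => //; apply: intr_inj. Qed.

Lemma pZtoC_polyOver_int (q : {poly int}) : pZtoC q \is a polyOver Num.int.
Proof. by apply/polyOverP => i; rewrite coef_map /= intr_int. Qed.

(* The primitive part of a rational multiple of [minCpoly x]. *)
Lemma minpolyZ_exists (x : algC) : exists P, is_minpolyZ x P.
Proof.
have [pq [Dpq monic_pq] dvd_pq] := minCpolyP x.
have [q [a nz_a Dq]] := rat_poly_scale pq.
have nz_q : q != 0.
  by apply: contraTneq monic_pq => q0; rewrite Dq q0 map_poly0 scaler0 monicE lead_coef0 eq_sym oner_eq0.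
have Eprim : pZtoQ (zprimitive q) = ((zcontents q)%:~R)^-1 * a%:~R *: pq.
  rewrite Dq scalerA -mulrA mulrV ?unitfE ?intr_eq0 // mulr1.
  have Eq := zpolyEprim q; set c := zcontents q in Eq *.
  rewrite [in RHS]Eq map_polyZ /= scalerA mulVr ?scale1r //.
  by rewrite unitfE intr_eq0 /c zcontents_eq0.
exists (zprimitive q); split.
- by rewrite zprimitive_eq0.
- rewrite pZtoCE Eprim map_polyZ /= rootZ -?Dpq ?root_minCpoly //.
  by rewrite fmorph_eq0 mulf_neq0 ?invr_eq0 ?intr_eq0 ?zcontents_eq0.
- move=> Q nz_Q; rewrite pZtoCE dvd_pq => rQ.
  have nz_Q' : pZtoQ Q != 0 by rewrite -size_poly_eq0 size_rat_int_poly size_poly_eq0.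
  have := dvdp_leq nz_Q' rQ; rewrite size_rat_int_poly size_zprimitive.
  by rewrite Dq size_scale ?invr_eq0 ?intr_eq0 // size_rat_int_poly.
- by rewrite zcontents_primitive nz_q.
- by rewrite -sgz_gt0 sgz_lead_primitive nz_q.
Qed.

Lemma mahlerP (x : algC) : mahler_rel x (mahler x).
Proof.
rewrite /mahler; apply: epsilon_spec.
have [P HP] := minpolyZ_exists x.
have [rs Drs] := closed_field_poly_normal (pZtoC P).
exists ((lead_coef P)%:~R * \prod_(r <- rs) Num.max 1 `|r|), P, rs; split => //.
by rewrite {1}Drs lead_coef_map_inj //; apply: intr_inj.
Qed.

Lemma le_max1_norm (r : algC) : 1 <= Num.max 1 `|r| /\ `|r| <= Num.max 1 `|r|.
Proof.
have c : (1 : algC) >=< `|r| by rewrite real_comparable ?normr_real ?real1.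
by rewrite !comparable_le_max // !lexx orbT.
Qed.

Lemma mahler_ge_lead_coef0 (x : algC) : exists P, [/\ is_minpolyZ x P,
  (lead_coef P)%:~R <= mahler x & `|(P`_0)%:~R| <= mahler x].
Proof.
have [P [rs [HP Drs ->]]] := mahlerP x.
have lead_ge1 : 1 <= (lead_coef P)%:~R :> algC.
  by case: HP => _ _ _ _; rewrite ler1z -gtz0_ge1.
have lead_gt0 := lt_le_trans ltr01 lead_ge1.
have prod_ge1 : 1 <= \prod_(r <- rs) Num.max 1 `|r|.
  by elim/big_ind: _ => // [|r _]; [exact: mulr_ege1 | exact: (le_max1_norm r).1].
exists P; split => //; first by rewrite ler_peMr // ltW.
rewrite -[(P`_0)%:~R](coef_map (intr : int -> algC)) -horner_coef0 Drs.
rewrite hornerZ horner_prod normrM normr_prod ger0_norm ?(ltW lead_gt0) // ler_pM2l //.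
by apply: ler_prod => r _; rewrite hornerXsubC sub0r normrN normr_ge0 (le_max1_norm r).2.
Qed.

Lemma mahler_ge1 (x : algC) : 1 <= mahler x.
Proof.
have [P [[_ _ _ _ lead_gt0] lead_le _]] := mahler_ge_lead_coef0 x.
by apply: le_trans lead_le; rewrite ler1z -gtz0_ge1.
Qed.

Lemma mahler_real (x : algC) : mahler x \is Num.real.
Proof. exact/ger0_real/(le_trans ler01 (mahler_ge1 x)). Qed.

Lemma lead_coef_mul_root_Aint (p : {poly algC}) x :
  p \is a polyOver Num.int -> root p x -> (1 < size p)%N ->
  lead_coef p * x \in Aint.
Proof.
move=> pZ rx sp.
set a := lead_coef p; set n := size p; set d := n.-1.
have dn : n = d.+1 by rewrite /d prednK // (ltn_trans _ sp).
have d_gt0 : (0 < d)%N by rewrite /d -subn1 subn_gt0.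
(* [a^(d-1) p(X/a)] is monic with integer coefficients and has root [a x]. *)
pose E i := if i == d then 1 else p`_i * a ^+ (d.-1 - i).
apply: (@root_monic_Aint (\poly_(i < n) E i)).
- rewrite /root horner_poly.
  have -> : \sum_(i < n) E i * (a * x) ^+ i = a ^+ d.-1 * p.[x].
    rewrite horner_coef mulr_sumr; apply: eq_bigr => [[i Hi]] _ /=.
    rewrite /E; case: eqP => [-> | ne].
      by rewrite mul1r exprMn /a lead_coefE -/n -/d mulrA -exprSr prednK.
    have id : (i < d)%N by rewrite ltn_neqAle (introN eqP ne) -ltnS -dn.
    have Ea : a ^+ (d.-1 - i) * a ^+ i = a ^+ d.-1.
      by rewrite -exprD subnK // -ltnS prednK.
    by rewrite exprMn -Ea; ring.
  by move/rootP: rx => ->; rewrite mulr0.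
- by rewrite monicE lead_coef_poly ?dn //= /E eqxx ?oner_eq0.
- apply/polyOverP => i; rewrite coef_poly; case: ifP => _; last exact: rpred0.
  rewrite /E; case: eqP => _; first exact: rpred1.
  by rewrite rpredM ?rpredX ?(polyOverP pZ) // /a lead_coefE (polyOverP pZ).
Qed.

Lemma coef0_div_root_Aint (p : {poly algC}) x :
  p \is a polyOver Num.int -> root p x -> x != 0 -> (1 < size p)%N ->
  p`_0 / x \in Aint.
Proof.
move=> pZ rx nz_x sp.
set n := size p; set d := n.-1.
have dn : n = d.+1 by rewrite /d prednK // (ltn_trans _ sp).
(* [x^-1] is a root of the reversed polynomial, whose leading coefficient is [p_0]. *)
pose R := \poly_(i < n) p`_(d - i).
have [p0 | nz_p0] := eqVneq p`_0 0; first by rewrite p0 mul0r; apply: Aint0.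
have lead_R : lead_coef R = p`_0 by rewrite lead_coef_poly dn //= subnn.
have size_R : size R = n by rewrite size_poly_eq dn //= subnn.
rewrite -lead_R; apply: lead_coef_mul_root_Aint.
- apply/polyOverP => i; rewrite coef_poly; case: ifP => _; last exact: rpred0.
  exact: (polyOverP pZ).
- apply/rootP; apply: (mulfI (expf_neq0 d nz_x)); rewrite mulr0.
  suff -> : x ^+ d * R.[x^-1] = p.[x] by apply/rootP.
  rewrite horner_poly mulr_sumr horner_coef.
  rewrite (reindex_inj rev_ord_inj) /=; apply: eq_bigr => [[i Hi]] _ /=.
  have id : (i <= d)%N by rewrite -ltnS -dn.
  have -> : (n - i.+1 = d - i)%N by rewrite dn subSS.
  rewrite subKn // mulrCA; congr (_ * _).
  by rewrite -{1}(subnK id) exprD exprVn mulrAC mulfV ?mul1r // expf_neq0.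
- by rewrite size_R.
Qed.

Lemma minpolyZ_coef0_neq0 (x : algC) P :
  is_minpolyZ x P -> x != 0 -> P`_0 != 0.
Proof.
move=> [nz_P rP minP _ _] nz_x; apply/eqP => P0.
(* Otherwise [P = X Q] and [Q] is a smaller integer polynomial vanishing at [x]. *)
have EP : P = drop_poly 1 P * 'X.
  rewrite -[LHS](poly_take_drop 1) expr1 addrC [X in _ + X](_ : _ = 0) ?addr0 //.
  by apply/polyP => i; rewrite coef_take_poly coef0; case: i => [|i] //=; rewrite P0.
set Q := drop_poly 1 P in EP.
have nz_Q : Q != 0 by apply: contraNneq nz_P => Q0; rewrite EP Q0 mul0r.
have rQ : root (pZtoC Q) x.
  move: rP; rewrite EP rmorphM /= map_polyX /root hornerMX.
  by rewrite mulf_eq0 (negbTE nz_x) orbF.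
by have := minP Q nz_Q rQ; rewrite EP size_mulX // ltnn.
Qed.

Definition p_integral (p : nat) (x : algC) : Prop :=
  exists2 N : nat, ~~ (p %| N)%N & N%:R * x \in Aint.

Section PIntegral.

Variable p : nat.
Hypothesis p_prime : prime p.

Lemma p_integralZ (c : int) x :
  ~~ (p %| `|c|)%N -> c%:~R * x \in Aint -> p_integral p x.
Proof.
move=> ndvd_c cx; exists `|c|%N => //.
by rewrite natr_absz normrEsign rmorphM /= rmorph_sign -mulrA rpredMsign.
Qed.

Lemma p_integral1 : p_integral p 1.
Proof. by exists 1%N; rewrite ?dvdn1 ?gtn_eqF ?prime_gt1 // mulr1 Aint1. Qed.

Lemma p_integralM x y : p_integral p x -> p_integral p y -> p_integral p (x * y).
Proof.
move=> [M ndvd_M Mx] [N ndvd_N Ny]; exists (M * N)%N.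
  by rewrite Euclid_dvdM // negb_or ndvd_M ndvd_N.
by rewrite natrM mulrACA rpredM.
Qed.

Lemma p_integral_prod (I : eqType) (s : seq I) (F : I -> algC) :
  {in s, forall i, p_integral p (F i)} -> p_integral p (\prod_(i <- s) F i).
Proof.
move=> Hs; rewrite big_seq.
by elim/big_ind: _ => //; [exact: p_integral1 | exact: p_integralM].
Qed.

Lemma p_integral_frac (u v : int) :
  v != 0 -> coprime `|u| `|v| -> p_integral p (u%:~R / v%:~R) -> ~~ (p %| `|v|)%N.
Proof.
move=> nz_v cop_uv [N ndvd_N Nuv]; apply: contra ndvd_N => /dvdn_trans; apply.
have [k Dk] : exists k : int, N%:R * (u%:~R / v%:~R) = k%:~R :> algC.
  by apply/intrP; rewrite Cint_rat_Aint // rpredM ?rpred_div ?rpred_nat ?rpred_int.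
have Euv : (N%:Z * u = k * v)%R.
  apply: (@intr_inj algC); rewrite !rmorphM /= -Dk.
  by rewrite -mulrA divfK ?intr_eq0.
have : (v %| N%:Z * u)%Z by rewrite Euv dvdz_mull.
by rewrite unfold_in /dvdz /= abszM Gauss_dvdl // coprime_sym.
Qed.

Lemma mahler_lt_p_integral x :
  x != 0 -> mahler x < p%:R -> p_integral p x /\ p_integral p x^-1.
Proof.
move=> nz_x lt_Mp; have [P [HP lead_le coef0_le]] := mahler_ge_lead_coef0 x.
have [nz_P rP _ _ lead_gt0] := HP.
have nz_PC : pZtoC P != 0 by rewrite -size_poly_eq0 size_pZtoC size_poly_eq0.
have size_gt1 : (1 < size (pZtoC P))%N by apply: root_size_gt1 rP.
have small (c : int) : c != 0 -> `|c%:~R| <= mahler x -> ~~ (p %| `|c|)%N.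
  move=> nz_c le_c; apply/negbT/gtnNdvd; first by rewrite absz_gt0.
  by rewrite -(ltr_nat algC) natr_absz intr_norm (le_lt_trans le_c).
split.
- apply: (@p_integralZ (lead_coef P)).
    by rewrite small ?lead_coef_eq0 // gtr0_norm ?ltr0z.
  have := lead_coef_mul_root_Aint (pZtoC_polyOver_int P) rP size_gt1.
  by rewrite lead_coef_map_inj //; apply: intr_inj.
- apply: (@p_integralZ P`_0); first exact: small (minpolyZ_coef0_neq0 HP nz_x) coef0_le.
  by have := coef0_div_root_Aint (pZtoC_polyOver_int P) rP nz_x size_gt1; rewrite coef_map.
Qed.

End PIntegral.

Lemma ratr_num_den (b : rat) : ratr b = (numq b)%:~R / (denq b)%:~R :> algC.
Proof. by rewrite -{1}(divq_num_den b) fmorph_div /= !rmorph_int. Qed.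

Lemma minpolyZ_rat (b : rat) P :
  is_minpolyZ (ratr b) P -> P = (denq b)%:P * 'X - (numq b)%:P.
Proof.
move=> [nz_P rP minP cont_P lead_gt0].
set n := numq b; set d := denq b.
have d_gt0 : 0 < d := denq_gt0 b.
have nz_dC : d%:~R != 0 :> algC by rewrite intr_eq0 gt_eqF.
have size_P : size P = 2%N.
  apply/eqP; rewrite eqn_leq; apply/andP; split.
    have size_Q : size (d%:P * 'X - n%:P) = 2%N.
      by rewrite -polyCN size_MXaddC polyC_eq0 gt_eqF //= size_polyC gt_eqF.
    rewrite -size_Q; apply: minP; first by rewrite -size_poly_eq0 size_Q.
    rewrite rmorphB rmorphM /= map_polyX !map_polyC /= /root.
    by rewrite hornerD hornerN hornerMX !hornerC ratr_num_den mulrC divfK ?subrr.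
  rewrite -size_pZtoC; apply: root_size_gt1 rP.
  by rewrite -size_poly_eq0 size_pZtoC size_poly_eq0.
have root_eq : P`_1 * n + P`_0 * d = 0.
  apply: (@intr_inj algC); rewrite rmorph0 rmorphD !rmorphM /=.
  move/rootP: rP; rewrite horner_coef size_pZtoC size_P !big_ord_recl big_ord0.
  rewrite !coef_map /= expr0 mulr1 expr1 addr0 ratr_num_den => root_b.
  by rewrite -[RHS](mul0r d%:~R) -root_b mulrDl mulrA divfK // addrC.
have [k Dk] : exists k, P`_1 = k * d.
  apply/dvdzP; rewrite -(@Gauss_dvdzr d n).
    have -> : n * P`_1 = - (P`_0 * d) by apply/eqP; rewrite -addr_eq0 mulrC root_eq.
    by rewrite rpredN dvdz_mull.
  by rewrite coprimezE coprime_sym coprime_num_den.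
have D0 : P`_0 = - (k * n).
  apply: (mulIf (negbT (gt_eqF d_gt0))); rewrite mulNr -mulrA (mulrC n) mulrA -Dk.
  by apply/eqP; rewrite -addr_eq0 addrC root_eq.
(* [k] divides both coefficients, hence the content of [P], which is 1. *)
have k_dvd : (k %| zcontents P)%Z.
  rewrite dvdz_contents; apply/polyOverP => -[|[|i]].
  - by rewrite D0 rpredN dvdz_mulr.
  - by rewrite Dk dvdz_mulr.
  - by rewrite nth_default ?rpred0 // size_P.
have k_eq1 : k = 1.
  have k_gt0 : 0 < k by rewrite -(pmulr_lgt0 _ d_gt0) -Dk; rewrite lead_coefE size_P in lead_gt0.
  by move: k_dvd; rewrite cont_P dvdz1 => /eqP abs_k; rewrite -(gtz0_abs k_gt0) abs_k.
apply/polyP => -[|[|i]]; rewrite coefB coefMX !coefC //=.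
- by rewrite D0 k_eq1 mul1r sub0r.
- by rewrite Dk k_eq1 mul1r subr0.
- by rewrite nth_default ?size_P // subrr.
Qed.

Lemma mahler_rat (b : rat) : mahler (ratr b) = (maxn `|denq b| `|numq b|)%:R.
Proof.
have [P [rs [HP Drs ->]]] := mahlerP (ratr b).
set n := numq b; set d := denq b.
have d_gt0 : 0 < d%:~R :> algC by rewrite ltr0z denq_gt0.
have EPC : pZtoC P = d%:~R *: ('X - (ratr b)%:P).
  rewrite (minpolyZ_rat HP) rmorphB rmorphM /= map_polyX !map_polyC /=.
  by rewrite scalerBr -!mul_polyC -polyCM ratr_num_den [d%:~R * _]mulrC divfK ?gt_eqF.
have lead_P : (lead_coef P)%:~R = d%:~R :> algC.
  have <- : lead_coef (pZtoC P) = d%:~R by rewrite EPC lead_coefZ lead_coefXsubC mulr1.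
  by rewrite lead_coef_map_inj //; apply: intr_inj.
have Ers : perm_eq rs [:: ratr b].
  apply: prod_XsubC_eq; rewrite big_seq1; apply: (scalerI (negbT (gt_eqF d_gt0))).
  by rewrite -EPC -lead_P -Drs.
rewrite (perm_big _ Ers) big_seq1 lead_P maxr_pMr ?ltW // mulr1.
rewrite ratr_num_den normrM normfV (gtr0_norm d_gt0) mulrCA divff ?gt_eqF // mulr1.
by rewrite -maxEnat natr_max !natr_absz -!intr_norm (gtr0_norm (denq_gt0 b)).
Qed.

Lemma lpf_max_pdiv n : (1 < n)%N -> lpf n = max_pdiv n.
Proof.
move=> n_gt1; apply/eqP; rewrite eqn_leq; apply/andP; split.
  by apply/bigmax_leqP_seq => p p_n _; apply: max_pdiv_max.
by apply: leq_bigmax_seq => //; rewrite -[_ \in _]/(_ \in \pi(n)) pi_max_pdiv.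
Qed.

Lemma prod_prime_factors n : (0 < n)%N ->
  exists2 s : seq nat, {subset s <= primes n} & (\prod_(q <- s) q)%N = n.
Proof.
move=> n_gt0; exists (flatten [seq nseq (logn p n) p | p <- primes n]).
  by move=> q /flatten_mapP[p p_n /nseqP[-> _]].
rewrite big_flatten /= big_map [RHS](prod_prime_decomp n_gt0) prime_decompE big_map.
by apply: eq_bigr => p _; rewrite big_nseq iter_muln_1.
Qed.

Lemma num_den_gt1 (a : rat) :
  a != 0 -> a != 1 -> a != -1 -> (1 < `|numq a| * `|denq a|)%N.
Proof.
move=> nz_a a_neq1 a_neqN1.
have num_gt0 : (0 < `|numq a|)%N by rewrite absz_gt0 numq_eq0.
have den_gt0 : (0 < `|denq a|)%N by rewrite absz_gt0 denq_neq0.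
rewrite ltn_neqAle muln_gt0 num_gt0 den_gt0 eq_sym muln_eq1 /= andbT.
apply/negP => /andP[/eqP abs_num /eqP abs_den].
have Ea : a = (numq a)%:~R by rewrite -[LHS]divq_num_den -(gtz0_abs (denq_gt0 a)) abs_den divr1.
have [] : numq a = 1 \/ numq a = -1.
  by case: (numq a) abs_num => [[|[|k]]|[|k]] // _; [left | right].
all: by move=> Enum; move: a_neq1 a_neqN1; rewrite Ea Enum eqxx.
Qed.

Lemma real_le_bigmax (R : numDomainType) (I : eqType) (s : seq I) (F : I -> R) x0 i :
  x0 \is Num.real -> (forall j, F j \is Num.real) -> i \in s ->
  F i <= \big[Num.max/x0]_(j <- s) F j.
Proof.
move=> x0_real F_real; elim: s => // j s IH; rewrite inE big_cons.
have cmp : F j >=< \big[Num.max/x0]_(k <- s) F k.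
  by rewrite real_comparable ?bigmax_real.
by case/orP=> [/eqP -> | /IH le_i]; rewrite comparable_le_max // ?lexx ?le_i ?orbT.
Qed.

Lemma ultra_values_ge (a : rat) p y : a != 0 -> prime p ->
  (p %| `|numq a| * `|denq a|)%N -> ultra_values (ratr a) y -> p%:R <= y.
Proof.
move=> nz_a p_prime p_dvd [s [_ nz_s Es ->]].
rewrite real_leNgt ?realn ?bigmax_real ?real0 // => [|x _]; last exact: mahler_real.
apply/negP => lt_max_p.
have int_s x : x \in s -> p_integral p x /\ p_integral p x^-1.
  move=> x_s; apply: mahler_lt_p_integral => //; first exact: (allP nz_s).
  by apply: le_lt_trans lt_max_p; apply: real_le_bigmax; rewrite ?real0 //; apply: mahler_real.
have int_a : p_integral p (ratr a).
  by rewrite -Es; apply: (p_integral_prod p_prime) => x /int_s[].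
have int_inv : p_integral p (ratr a)^-1.
  by rewrite -Es -prodfV; apply: (p_integral_prod p_prime) => x /int_s[].
rewrite ratr_num_den in int_a int_inv; rewrite invf_div in int_inv.
have ndvd_den := p_integral_frac (denq_neq0 a) (coprime_num_den a) int_a.
have ndvd_num : ~~ (p %| `|numq a|)%N.
  by apply: p_integral_frac int_inv; rewrite ?numq_eq0 // coprime_sym coprime_num_den.
by move: p_dvd; rewrite Euclid_dvdM // (negPf ndvd_num) (negPf ndvd_den).
Qed.

Lemma num_den_invn (q : nat) :
  (0 < q)%N -> numq (q%:R^-1 : rat) = 1 /\ denq (q%:R^-1 : rat) = q.
Proof.
move=> q_gt0; have Eden : denq (q%:R^-1 : rat) = q.
  by rewrite -[q%:R]/((q%:Z)%:~R : rat) denqVz // eqz_nat -lt0n.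
by split => //; apply: (@intr_inj rat); rewrite numqE Eden mulVf // pnatr_eq0 -lt0n.
Qed.

Lemma ultra_values_le (a : rat) : a != 0 ->
  exists2 y, ultra_values (ratr a) y & y <= (max_pdiv (`|numq a| * `|denq a|))%:R.
Proof.
move=> nz_a; set m := max_pdiv _.
have num_gt0 : (0 < `|numq a|)%N by rewrite absz_gt0 numq_eq0.
have den_gt0 : (0 < `|denq a|)%N by rewrite absz_gt0 denq_neq0.
have le_m q : (q \in primes `|numq a|) || (q \in primes `|denq a|) -> (q <= m)%N.
  by move=> q_nd; apply: max_pdiv_max; rewrite -[q \in _]/(q \in primes _) primesM.
have [sn sn_primes Esn] := prod_prime_factors num_gt0.
have [sd sd_primes Esd] := prod_prime_factors den_gt0.
pose t : seq rat :=
  (-1) ^+ (numq a < 0)%R :: [seq q%:R | q <- sn] ++ [seq q%:R^-1 | q <- sd].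
have t_small b : b \in t -> b != 0 /\ (maxn `|denq b| `|numq b| <= m)%N.
  rewrite inE mem_cat => /or3P[/eqP-> | /mapP[q q_sn ->] | /mapP[q q_sd ->]].
  - by rewrite signr_eq0; case: (numq a < 0)%R; rewrite /= ?expr1 ?numqN ?denqN max_pdiv_gt0.
  - have q_gt0 : (0 < q)%N by move/sn_primes: q_sn; rewrite mem_primes => /and3P[/prime_gt0].
    rewrite pnatr_eq0 -lt0n q_gt0 -[q%:R]/((q%:Z)%:~R : rat) numq_int denq_int.
    by split => //; rewrite geq_max max_pdiv_gt0 le_m ?sn_primes.
  - have q_gt0 : (0 < q)%N by move/sd_primes: q_sd; rewrite mem_primes => /and3P[/prime_gt0].
    have [-> ->] := num_den_invn q_gt0.
    by rewrite invr_eq0 pnatr_eq0 -lt0n q_gt0 geq_max max_pdiv_gt0 le_m ?sd_primes ?orbT.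
exists (\big[Num.max/0]_(x <- map ratr t) mahler x).
  exists (map ratr t); split => //.
    by rewrite all_map; apply/allP => b /t_small[nz_b _] /=; rewrite fmorph_eq0.
  rewrite big_map -rmorph_prod; congr ratr.
  rewrite big_cons big_cat !big_map prodfV -!natr_prod Esn Esd /= -[RHS]divq_num_den.
  rewrite {3}[numq a]intEsign rmorphM rmorph_sign mulrA.
  by rewrite -(gtz0_abs (denq_gt0 a)).
rewrite big_seq; apply: bigmax_le => [|x /mapP[b b_t ->]]; first exact: ler0n.
by rewrite mahler_rat ler_nat; case: (t_small b b_t).
Qed.

Theorem mainTheorem3 (a : rat) :
  a != 0 -> a != 1 -> a != -1 ->
  ultra_mahler_is (ratr a : algC)
    ((lpf (absz (numq a) * absz (denq a)))%:R : algC).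
Proof.
move=> nz_a a_neq1 a_neqN1.
rewrite lpf_max_pdiv ?num_den_gt1 //; split.
- move=> y; apply: ultra_values_ge => //.
    by rewrite max_pdiv_prime ?num_den_gt1.
  exact: max_pdiv_dvd.
- move=> e e_gt0; have [y y_a le_y] := ultra_values_le nz_a.
  by exists y; split => //; apply: le_lt_trans le_y _; rewrite ltrDl.
Qed.
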